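(* Let $p>0$, $m>0$, and let $N$ be a random variable on $\mathbb{N}_0$ with the Takacs probability mass function \[ f(n)=\mathbb{P}(N=n)=\nu(n)\Big(\frac{m(p+m)}{(p+2m)^2}\Big)^{n}\Big(\frac{p+m}{p+2m}\Big)^{p},\qquad \nu(n)=\frac{p}{n+p}\,\frac{(n+p)(n+p+1)\cdots(2n+p-1)}{n!}, \] for $n\in\mathbb{N}_0$ (with $\nu(0)=1$). Let $b(n)=\frac{1}{\sqrt{n+1}}\big(\sqrt{1+\tfrac1n}-1\big)$ for $n\ge 1$. Then there is a constant $C$ not depending on $n$ such that \[ f(n\mid n\ge 1):=\mathbb{P}(N=n\mid N\ge 1)\le C\,b(n)\qquad\text{for all } n=1,2,\ldots. \]
   Context: $b$ is the probability mass function of $\lfloor U^{-2}\rfloor$ for $U$ uniform on $(0,1)$. The constant $C$ may depend on $p$ and $m$. *)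

From Stdlib Require Import Reals Arith.
Open Scope R_scope.

Fixpoint rising (a : R) (k : nat) : R :=
  match k with
  | O => 1
  | S j => rising a j * (a + INR j)
  end.

Definition takacs_nu (p : R) (n : nat) : R :=
  p / (INR n + p) * rising (INR n + p) n / INR (Factorial.fact n).

Definition takacs_pmf (p m : R) (n : nat) : R :=
  takacs_nu p n * (m * (p + m) / (p + 2 * m) ^ 2) ^ n
  * Rpower ((p + m) / (p + 2 * m)) p.

(* f(n | n >= 1) = P(N = n) / P(N >= 1), with P(N >= 1) = 1 - P(N = 0) *)
Definition takacs_cond (p m : R) (n : nat) : R :=
  takacs_pmf p m n / (1 - takacs_pmf p m 0).

Definition b (n : nat) : R :=
  / sqrt (INR n + 1) * (sqrt (1 + / INR n) - 1).

(* The pmf satisfies f(n+1) (n+1)(n+p+1) = x (2n+p)(2n+p+1) f(n) with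
   x = m(p+m)/(p+2m)^2, and 1 - 4x = (p/(p+2m))^2 > 0.  Hence the ratio
   f(n+1)/f(n) tends to 4x < 1, so f(n) (n+1)^2 is eventually nonincreasing and
   therefore bounded.  Since b(n) >= 1/(3(n+1)^2), this gives f(n) <= C b(n),
   and conditioning on N >= 1 only divides by 1 - f(0) = 1 - ((p+m)/(p+2m))^p > 0. *)

From Stdlib Require Import Reals Lra Lia Psatz.
Open Scope R_scope.

Lemma rising_shift (a : R) (k : nat) :
  rising (a + 1) k * a = rising a k * (a + INR k).
Proof.
  induction k as [|k IH]; cbn [rising]; [simpl; ring|].
  rewrite S_INR.
  replace (rising (a + 1) k * (a + 1 + INR k) * a)
    with (rising (a + 1) k * a * (a + 1 + INR k)) by ring.
  rewrite IH; ring.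
Qed.

Lemma rising_pos (a : R) (k : nat) : 0 < a -> 0 < rising a k.
Proof.
  intro Ha; induction k as [|k IH]; simpl; [lra|].
  pose proof (pos_INR k); apply Rmult_lt_0_compat; lra.
Qed.

Lemma takacs_nu_pos (p : R) (n : nat) : 0 < p -> 0 < takacs_nu p n.
Proof.
  intro hp; unfold takacs_nu, Rdiv.
  pose proof (pos_INR n).
  pose proof (lt_0_INR _ (Factorial.lt_O_fact n)).
  pose proof (rising_pos (INR n + p) n ltac:(lra)).
  repeat apply Rmult_lt_0_compat; try apply Rinv_0_lt_compat; lra.
Qed.

Lemma takacs_nu_succ (p : R) (n : nat) : 0 < p ->
  takacs_nu p (S n) * ((INR n + p + 1) * (INR n + 1)) =
  takacs_nu p n * ((2 * INR n + p) * (2 * INR n + p + 1)).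
Proof.
  intro hp; unfold takacs_nu.
  pose proof (pos_INR n).
  pose proof (lt_0_INR _ (Factorial.lt_O_fact n)).
  rewrite fact_simpl, mult_INR, S_INR.
  replace (INR n + 1 + p) with ((INR n + p) + 1) by ring.
  pose proof (rising_shift (INR n + p) (S n)) as Hshift.
  simpl rising in Hshift |- *; rewrite S_INR in *.
  set (r := rising (INR n + p) n) in *.
  set (r1 := rising (INR n + p + 1) n) in *.
  assert (Hr1 : r1 * (INR n + p + 1 + INR n) =
                r * (INR n + p + INR n) * (INR n + p + INR n + 1) / (INR n + p)).
  { apply (Rmult_eq_reg_r (INR n + p)); [|lra].
    rewrite Hshift; field; lra. }
  rewrite Hr1; field; repeat split; lra.
Qed.

Lemma takacs_pmf_pos (p m : R) (n : nat) : 0 < p -> 0 < m -> 0 < takacs_pmf p m n.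
Proof.
  intros hp hm; unfold takacs_pmf, Rpower.
  pose proof (takacs_nu_pos p n hp).
  assert (Hx : 0 < m * (p + m) / (p + 2 * m) ^ 2)
    by (apply Rdiv_lt_0_compat; [nra | apply pow_lt; lra]).
  pose proof (exp_pos (p * ln ((p + m) / (p + 2 * m)))).
  pose proof (pow_lt _ n Hx).
  apply Rmult_lt_0_compat; [apply Rmult_lt_0_compat|]; assumption.
Qed.

Lemma takacs_pmf_succ (p m : R) (n : nat) : 0 < p ->
  takacs_pmf p m (S n) * ((INR n + p + 1) * (INR n + 1)) =
  m * (p + m) / (p + 2 * m) ^ 2 * ((2 * INR n + p) * (2 * INR n + p + 1))
  * takacs_pmf p m n.
Proof.
  intro hp; unfold takacs_pmf.
  set (x := m * (p + m) / (p + 2 * m) ^ 2).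
  set (c := Rpower ((p + m) / (p + 2 * m)) p).
  rewrite <- tech_pow_Rmult.
  transitivity (takacs_nu p (S n) * ((INR n + p + 1) * (INR n + 1)) * x * x ^ n * c);
    [ring|].
  rewrite takacs_nu_succ by exact hp; ring.
Qed.

Lemma takacs_pmf_0_lt_1 (p m : R) : 0 < p -> 0 < m -> takacs_pmf p m 0 < 1.
Proof.
  intros hp hm; unfold takacs_pmf, takacs_nu, Rpower; simpl.
  assert (Hr : 0 < (p + m) / (p + 2 * m) < 1).
  { split; [apply Rdiv_lt_0_compat; lra|].
    apply (Rmult_lt_reg_r (p + 2 * m)); [lra|].
    unfold Rdiv; rewrite Rmult_assoc, Rinv_l by lra; lra. }
  assert (Hln : ln ((p + m) / (p + 2 * m)) < 0)
    by (rewrite <- ln_1; apply ln_increasing; lra).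
  assert (Hexp : exp (p * ln ((p + m) / (p + 2 * m))) < 1)
    by (rewrite <- exp_0; apply exp_increasing; nra).
  replace (p / (0 + p) * 1 / 1) with 1 by (field; lra).
  lra.
Qed.

(* f(k+1)(k+2)^2 <= f(k)(k+1)^2 after the recurrence: the gap 1 - 4x of the
   ratio below 1 beats the O(1/k) growth of the weight once k >= (4p+3)/(1-4x). *)
Lemma weighted_ratio_le (p x k : R) :
  0 < p -> 0 <= x -> 0 <= k -> 4 * p + 3 <= (1 - 4 * x) * (k + 1) ->
  x * ((2 * k + p) * (2 * k + p + 1)) * (k + 2) ^ 2 <= (k + 1) ^ 3 * (k + p + 1).
Proof.
  intros hp hx hk Hk.
  assert (Hprod : (2 * k + p) * (2 * k + p + 1) <= 4 * (k + p + 1) ^ 2) by nra.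
  assert (Hweight : (k + p + 1) * (k + 2) ^ 2 - (k + 1) ^ 3 <= (4 * p + 3) * (k + 1) ^ 2)
    by nra.
  assert (Hslack : (4 * p + 3) * (k + 1) ^ 2 <= (1 - 4 * x) * (k + 1) ^ 3)
    by (replace ((1 - 4 * x) * (k + 1) ^ 3) with ((1 - 4 * x) * (k + 1) * (k + 1) ^ 2)
          by ring; apply Rmult_le_compat_r; nra).
  assert (Hgrow : (1 - 4 * x) * (k + 1) ^ 3 <= (1 - 4 * x) * ((k + p + 1) * (k + 2) ^ 2)).
  { apply Rmult_le_compat_l; [|nra].
    apply Rmult_le_reg_r with (k + 1); nra. }
  assert (Hcube : 4 * x * (k + p + 1) * (k + 2) ^ 2 <= (k + 1) ^ 3) by lra.
  apply Rle_trans with (x * (4 * (k + p + 1) ^ 2) * (k + 2) ^ 2).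
  - apply Rmult_le_compat_r; [nra|]; apply Rmult_le_compat_l; assumption.
  - replace (x * (4 * (k + p + 1) ^ 2) * (k + 2) ^ 2)
      with (4 * x * (k + p + 1) * (k + 2) ^ 2 * (k + p + 1)) by ring.
    apply Rmult_le_compat_r; lra.
Qed.

Lemma takacs_pmf_weighted_eventually_nonincreasing (p m : R) : 0 < p -> 0 < m ->
  exists N : nat, forall n : nat, (N <= n)%nat ->
    takacs_pmf p m (S n) * (INR (S n) + 1) ^ 2 <= takacs_pmf p m n * (INR n + 1) ^ 2.
Proof.
  intros hp hm.
  set (x := m * (p + m) / (p + 2 * m) ^ 2).
  assert (Hx : 0 <= x) by (apply Rlt_le, Rdiv_lt_0_compat; [nra | apply pow_lt; lra]).
  assert (Hgap : 1 - 4 * x = (p / (p + 2 * m)) ^ 2) by (unfold x; field; lra).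
  assert (Hgap_pos : 0 < 1 - 4 * x)
    by (rewrite Hgap; apply pow_lt, Rdiv_lt_0_compat; lra).
  destruct (INR_unbounded ((4 * p + 3) / (1 - 4 * x))) as [N HN].
  exists N; intros n Hn.
  apply le_INR in Hn; pose proof (pos_INR n) as Hn0.
  assert (Hk : 4 * p + 3 <= (1 - 4 * x) * (INR n + 1)).
  { apply (Rmult_le_reg_r (/ (1 - 4 * x))); [apply Rinv_0_lt_compat; lra|].
    replace ((1 - 4 * x) * (INR n + 1) * / (1 - 4 * x)) with (INR n + 1)
      by (field; lra).
    unfold Rdiv in HN; lra. }
  pose proof (weighted_ratio_le p x (INR n) hp Hx Hn0 Hk) as Hratio.
  pose proof (takacs_pmf_pos p m n hp hm) as Hf.
  apply (Rmult_le_reg_r ((INR n + p + 1) * (INR n + 1))); [nra|].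
  rewrite S_INR.
  transitivity (takacs_pmf p m (S n) * ((INR n + p + 1) * (INR n + 1)) * (INR n + 2) ^ 2);
    [right; ring|].
  rewrite takacs_pmf_succ by exact hp; fold x.
  transitivity (takacs_pmf p m n *
                (x * ((2 * INR n + p) * (2 * INR n + p + 1)) * (INR n + 2) ^ 2));
    [right; ring|].
  transitivity (takacs_pmf p m n * ((INR n + 1) ^ 3 * (INR n + p + 1)));
    [apply Rmult_le_compat_l; lra|].
  right; ring.
Qed.

Lemma prefix_bounded (h : nat -> R) (N : nat) :
  exists M : R, forall n : nat, (n <= N)%nat -> h n <= M.
Proof.
  induction N as [|N [M HM]].
  - exists (h 0%nat); intros n Hn; replace n with 0%nat by lia; lra.
  - exists (Rmax M (h (S N))); intros n Hn.
    destruct (Nat.eq_dec n (S N)) as [->|Hne]; [apply Rmax_r|].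
    apply Rle_trans with M; [apply HM; lia | apply Rmax_l].
Qed.

Lemma eventually_nonincreasing_bounded (h : nat -> R) (N : nat) :
  (forall n : nat, (N <= n)%nat -> h (S n) <= h n) ->
  exists M : R, forall n : nat, h n <= M.
Proof.
  intro Hdecr; destruct (prefix_bounded h N) as [M HM].
  exists M; intro n.
  destruct (Nat.le_gt_cases n N) as [Hn|Hn]; [auto|].
  induction n as [|n IH]; [lia|].
  apply Rle_trans with (h n); [apply Hdecr; lia|].
  destruct (Nat.eq_dec n N) as [->|Hne]; [auto | apply IH; lia].
Qed.

Lemma b_ge_inv_sq (n : nat) : (1 <= n)%nat -> / (3 * (INR n + 1) ^ 2) <= b n.
Proof.
  intro Hn; apply le_INR in Hn; simpl in Hn; unfold b.
  set (x := INR n) in *.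
  assert (Hsqrt_inv : 1 + / (3 * x) <= sqrt (1 + / x)).
  { assert (0 < / (3 * x)) by (apply Rinv_0_lt_compat; lra).
    rewrite <- (sqrt_square (1 + / (3 * x))) by lra.
    apply sqrt_le_1_alt.
    replace ((1 + / (3 * x)) * (1 + / (3 * x)))
      with (1 + / x - / x * (1 / 3 - / (9 * x))) by (field; lra).
    assert (/ (9 * x) <= / 9) by (apply Rinv_le_contravar; lra).
    assert (0 <= / x * (1 / 3 - / (9 * x)))
      by (apply Rmult_le_pos; [left; apply Rinv_0_lt_compat|]; lra).
    lra. }
  assert (Hsqrt : sqrt (x + 1) <= x + 1).
  { rewrite <- (sqrt_square (x + 1)) at 2 by lra. apply sqrt_le_1_alt; nra. }
  assert (0 < sqrt (x + 1)) by (apply sqrt_lt_R0; lra).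
  apply Rle_trans with (/ (x + 1) * / (3 * x)).
  - rewrite <- Rinv_mult; apply Rinv_le_contravar; nra.
  - apply Rmult_le_compat; try (left; apply Rinv_0_lt_compat); try lra.
    apply Rinv_le_contravar; lra.
Qed.

Theorem mainTheorem5 (p m : R) (hp : 0 < p) (hm : 0 < m) :
  exists C : R, forall n : nat, (1 <= n)%nat -> takacs_cond p m n <= C * b n.
Proof.
  destruct (takacs_pmf_weighted_eventually_nonincreasing p m hp hm) as [N Hdecr].
  destruct (eventually_nonincreasing_bounded
              (fun n => takacs_pmf p m n * (INR n + 1) ^ 2) N Hdecr) as [M HM].
  pose proof (takacs_pmf_0_lt_1 p m hp hm) as Hf0.
  exists (3 * M / (1 - takacs_pmf p m 0)); intros n Hn.
  pose proof (b_ge_inv_sq n Hn) as Hb.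
  pose proof (HM n) as HMn; pose proof (pos_INR n).
  assert (Hsq : 0 < (INR n + 1) ^ 2) by (apply pow_lt; lra).
  assert (Hf : takacs_pmf p m n <= 3 * M * b n).
  { assert (0 <= M) by (pose proof (takacs_pmf_pos p m n hp hm); nra).
    apply Rle_trans with (3 * M * / (3 * (INR n + 1) ^ 2)).
    - apply (Rmult_le_reg_r ((INR n + 1) ^ 2)); [exact Hsq|].
      replace (3 * M * / (3 * (INR n + 1) ^ 2) * (INR n + 1) ^ 2) with M
        by (field; lra).
      exact HMn.
    - apply Rmult_le_compat_l; lra. }
  unfold takacs_cond, Rdiv.
  replace (3 * M * / (1 - takacs_pmf p m 0) * b n)
    with (3 * M * b n * / (1 - takacs_pmf p m 0)) by ring.
  apply Rmult_le_compat_r; [left; apply Rinv_0_lt_compat; lra | exact Hf].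
Qed.
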